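(* Let $\sigma\in S_t$ and $p\in S_k$, and let $m=\min(t,k)$. If $\mathrm{red}(p_1p_2\cdots p_m)\neq\mathrm{red}(\sigma_1\sigma_2\cdots\sigma_m)$, then the set $\{1\}$ is reversibly deletable for $p$ with respect to $\{(\sigma,[t-1])\}$.
   Context: Notation: $\mathrm{red}(w)$ replaces the $i$-th smallest letter of a word $w$ of distinct integers by $i$. A vincular pattern of length $\ell$ is $(\sigma,X)$ with $\sigma\in S_\ell$, $X\subseteq[\ell-1]$; $\pi\in S_n$ contains it if there are $i_1<\dots<i_\ell$ with $\mathrm{red}(\pi_{i_1}\cdots\pi_{i_\ell})=\sigma$ and $i_{x+1}=i_x+1$ for all $x\in X$; $(\sigma,[t-1])$ for $\sigma\in S_t$ is the consecutive pattern $\sigma$. For $p\in S_k$ and $w\in[n]^k$ with distinct letters and $\mathrm{red}(w)=p$, $S_n^B(p;w)$ is the set of $\pi\in S_n$ avoiding every pattern in $B$ with $\pi_i=w_i$ for $i\le k$. For a set of indices $R$, $d_R(\pi)$ is obtained from $\pi$ by deleting the letters in positions in $R$ and reducing; for a word $w$ with distinct letters, $d_R(w)$ deletes $w_r$ ($r\in R$) and subtracts from each remaining $w_i$ the number of $r\in R$ with $w_r<w_i$. A set $R\subseteq[k]$ is reversibly deletable for $p$ with respect to $B$ if for every $n$ and every such $w$ with $S_n^B(p;w)\neq\emptyset$, the map $d_R$ restricts to a bijection $S_n^B(p;w)\to S_{n-|R|}^B(d_R(p);d_R(w))$. *)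

(* Permutations and words are represented as seq nat
   with letters 1..n; positions are 1-indexed in the paper. *)
From mathcomp Require Import all_boot.
Set Implicit Arguments. Unset Strict Implicit. Unset Printing Implicit Defensive.

Definition red (w : seq nat) : seq nat :=
  [seq (count (fun y => y < x) w).+1 | x <- w].

Definition is_perm (n : nat) (s : seq nat) : bool := perm_eq s (iota 1 n).

(* A vincular pattern (sigma, X): sigma in S_l, X a subset of [l-1]. *)
Definition vpattern := (seq nat * seq nat)%type.

(* pi contains (sigma, X): there are positions i_1 < ... < i_l (here stored
   0-indexed in the list I) with red(pi_{i_1} ... pi_{i_l}) = sigma and
   i_{x+1} = i_x + 1 for every x in X. *)
Definition contains (pi : seq nat) (pat : vpattern) : Prop :=
  exists I : seq nat,
    [/\ size I = size pat.1,
        sorted ltn I,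
        all (fun i => i < size pi) I,
        red [seq nth 0 pi i | i <- I] = pat.1 &
        forall x, x \in pat.2 -> nth 0 I x = (nth 0 I x.-1).+1].

Definition avoids (B : seq vpattern) (pi : seq nat) : Prop :=
  forall pat, pat \in B -> ~ contains pi pat.

Definition inS (n : nat) (B : seq vpattern) (p w : seq nat) (pi : seq nat) : Prop :=
  [/\ is_perm n pi, avoids B pi &
      forall i, 1 <= i <= size p -> nth 0 pi i.-1 = nth 0 w i.-1].

Definition del_pos (R : seq nat) (s : seq nat) : seq nat :=
  mask [seq i.+1 \notin R | i <- iota 0 (size s)] s.

Definition dR (R : seq nat) (pi : seq nat) : seq nat := red (del_pos R pi).

Definition dRw (R : seq nat) (w : seq nat) : seq nat :=
  [seq x - count (fun r => nth 0 w r.-1 < x) R | x <- del_pos R w].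

Definition rev_deletable (B : seq vpattern) (p : seq nat) (R : seq nat) : Prop :=
  uniq R /\ all (fun r => 1 <= r <= size p) R /\
  forall (n : nat) (w : seq nat),
    size w = size p -> uniq w -> all (fun x => 1 <= x <= n) w -> red w = p ->
    (exists pi, inS n B p w pi) ->
    [/\ (forall pi, inS n B p w pi ->
           inS (n - size R) B (dR R p) (dRw R w) (dR R pi)),
        (forall pi1 pi2, inS n B p w pi1 -> inS n B p w pi2 ->
           dR R pi1 = dR R pi2 -> pi1 = pi2) &
        (forall tau, inS (n - size R) B (dR R p) (dRw R w) tau ->
           exists2 pi, inS n B p w pi & dR R pi = tau)].

From mathcomp Require Import all_boot zify.
Set Implicit Arguments. Unset Strict Implicit. Unset Printing Implicit Defensive.

(* Write a permutation pi of S_n^B(p; w) with w = a :: w' as a :: b.  The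
   map d_{1} sends it to red b = unl_a b, where unl_a lowers every letter
   above a by one; its inverse inserts a back in front, tau |-> a :: lft_a tau.  Only surjectivity uses the hypothesis on sigma: the
   prefix of a :: lft_a tau of length |p| is w, so its reduced prefixes agree
   with those of p, and red(p_1..p_m) <> red(sigma_1..sigma_m) forbids an
   occurrence of sigma at the start. *)

Definition rank (s : seq nat) (x : nat) : nat := (count (fun y => y < x) s).+1.

Lemma redE (s : seq nat) : red s = map (rank s) s.
Proof. by []. Qed.

Lemma size_red (s : seq nat) : size (red s) = size s.
Proof. exact: size_map. Qed.

Lemma count_sub_lt (a1 a2 : pred nat) (s : seq nat) (z : nat) :
  subpred a1 a2 -> z \in s -> a2 z -> ~~ a1 z -> count a1 s < count a2 s.
Proof.
move=> a12; elim: s => [//|y s IH]; rewrite inE => /orP[/eqP->|zs] a2z a1z /=.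
  by rewrite (negbTE a1z) a2z add0n add1n ltnS; apply: sub_count.
have := IH zs a2z a1z; case: (a1 y) (a12 y) => [->//|_]; case: (a2 y) => /=; lia.
Qed.

Lemma rank_mono (s : seq nat) : {in s &, forall x y, (rank s x < rank s y) = (x < y)}.
Proof.
move=> x y xs ys; rewrite /rank ltnS; case: (ltnP x y) => xy.
  apply: (count_sub_lt (z := x)) => //=; last by rewrite ltnn.
  by move=> u /= ux; apply: ltn_trans xy.
by apply/negbTE; rewrite -leqNgt; apply: sub_count => u /= uy; apply: leq_trans uy xy.
Qed.

Lemma red_map (f : nat -> nat) (s : seq nat) :
  {in s &, forall x y, (f x < f y) = (x < y)} -> red (map f s) = red s.
Proof.
move=> fmono; rewrite /red -map_comp; apply/eq_in_map => x xs /=; rewrite count_map.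
by congr S; apply: eq_in_count => y ys /=; apply: fmono.
Qed.

Lemma red_take (m : nat) (s : seq nat) : red (take m (red s)) = red (take m s).
Proof.
rewrite [red s]redE -map_take red_map // => x y /mem_take xs /mem_take ys.
exact: rank_mono.
Qed.

Lemma perm_facts (n : nat) (s : seq nat) : is_perm n s ->
  [/\ uniq s, size s = n & forall x, x \in s -> 1 <= x <= n].
Proof.
move=> ps; split.
- by rewrite (perm_uniq ps) iota_uniq.
- by rewrite (perm_size ps) size_iota.
- by move=> x; rewrite (perm_mem ps) mem_iota; lia.
Qed.

Lemma uniq_is_perm (n : nat) (s : seq nat) :
  uniq s -> all (fun x => 1 <= x <= n) s -> size s = n -> is_perm n s.
Proof.
move=> us /allP sn sz; apply: uniq_perm => //; first exact: iota_uniq.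
have sub_iota : {subset s <= iota 1 n}.
  by move=> x /sn /andP[x1 xn]; rewrite mem_iota; lia.
by apply: (uniq_min_size us sub_iota _).2; rewrite size_iota sz.
Qed.

Lemma red_is_perm (s : seq nat) : uniq s -> is_perm (size s) (red s).
Proof.
move=> us; rewrite redE; apply: uniq_is_perm; last by rewrite size_map.
  rewrite map_inj_in_uniq // => x y xs ys exy.
  by have := rank_mono xs ys; have := rank_mono ys xs; rewrite exy ltnn; lia.
apply/allP => _ /mapP[x xs ->]; rewrite /rank ltnS /= -(count_predT s).
by apply: (count_sub_lt (z := x)) => //=; rewrite ltnn.
Qed.

Lemma count_iota_lt (m n x : nat) :
  x <= m + n -> count (fun y => y < x) (iota m n) = x - m.
Proof.
elim: n m => [|n IH] m /=; first by rewrite addn0; lia.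
by move=> xmn; rewrite IH; [case: (ltnP m x) => /=; lia | lia].
Qed.

Lemma perm_count_lt (n : nat) (s : seq nat) (x : nat) :
  is_perm n s -> x \in s -> count (fun y => y < x) s = x - 1.
Proof.
move=> ps xs; rewrite (permP ps) count_iota_lt //.
by move: xs; rewrite (perm_mem ps) mem_iota; lia.
Qed.

Lemma red_perm (n : nat) (s : seq nat) : is_perm n s -> red s = s.
Proof.
move=> ps; rewrite redE -[RHS]map_id; apply/eq_in_map => x xs.
by rewrite /rank (perm_count_lt ps xs); move: xs; rewrite (perm_mem ps) mem_iota; lia.
Qed.

(* unl a closes the gap left by a; lft a opens a gap at a. *)
Definition unl (a x : nat) : nat := x - (a < x).
Definition lft (a x : nat) : nat := if a <= x then x.+1 else x.

Lemma lft_unl (a x : nat) : x != a -> lft a (unl a x) = x.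
Proof. by rewrite /lft /unl => /eqP xa; case: (ltnP a x) => ax /=; case: ifP => /=; lia. Qed.

Lemma unl_lft (a y : nat) : unl a (lft a y) = y.
Proof. by rewrite /lft /unl; case: (leqP a y) => ay; case: ltnP => /=; lia. Qed.

Lemma lft_neq (a y : nat) : lft a y != a.
Proof. by rewrite /lft; case: leqP => ay; apply/eqP; lia. Qed.

Lemma lft_mono (a x y : nat) : (lft a x < lft a y) = (x < y).
Proof. by rewrite /lft; case: (leqP a x); case: (leqP a y) => ay ax; apply/idP/idP; lia. Qed.

Lemma map_lft_unl (a : nat) (s : seq nat) : a \notin s -> map (lft a) (map (unl a) s) = s.
Proof.
move=> as_; rewrite -map_comp -[RHS]map_id; apply/eq_in_map => x xs /=.
by apply: lft_unl; apply: contraNneq as_ => <-.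
Qed.

Lemma red_behead_perm (n a : nat) (b : seq nat) :
  is_perm n (a :: b) -> red b = map (unl a) b.
Proof.
move=> ps; rewrite redE; apply/eq_in_map => x xb.
have xs : x \in a :: b by rewrite inE xb orbT.
have := perm_count_lt ps xs; rewrite /= /rank /unl.
have : 1 <= x by move: xs; rewrite (perm_mem ps) mem_iota; lia.
by case: (a < x) => /=; lia.
Qed.

Lemma cons_lft_perm (n a : nat) (tau : seq nat) :
  1 <= a <= n -> is_perm n.-1 tau -> is_perm n (a :: map (lft a) tau).
Proof.
move=> an ptau; have [utau sztau intau] := perm_facts ptau.
apply: uniq_is_perm.
- rewrite /= map_inj_in_uniq ?utau ?andbT.
    by apply/mapP => -[y _ /eqP]; rewrite eq_sym (negbTE (lft_neq a y)).
  by move=> x y _ _ exy; rewrite -(unl_lft a x) exy unl_lft.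
- apply/allP => x; rewrite inE => /orP[/eqP->//|/mapP[y /intau yn ->]].
  by rewrite /lft; case: (leqP a y) => /=; lia.
- by rewrite /= size_map sztau; lia.
Qed.

Lemma inS_prefixP (n : nat) (p w pi : seq nat) :
  is_perm n pi -> size p = size w -> size w <= n ->
  (forall i, 1 <= i <= size p -> nth 0 pi i.-1 = nth 0 w i.-1) <-> take (size w) pi = w.
Proof.
move=> /perm_facts[_ szpi _] -> wn; split => [agree | e i /andP[i1 iw]].
  apply: (@eq_from_nth _ 0); first by rewrite size_takel ?szpi.
  move=> i; rewrite size_takel ?szpi // => iw.
  by rewrite nth_take // -[i]/(i.+1.-1) agree //; lia.
by rewrite -[in RHS]e nth_take //; lia.
Qed.

Lemma prefix_not_pattern (u p sigma : seq nat) :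
  red (take (size p) u) = p ->
  red (take (minn (size sigma) (size p)) p) !=
    red (take (minn (size sigma) (size p)) sigma) ->
  red (take (size sigma) u) != sigma.
Proof.
move=> up; apply: contra => /eqP us; apply/eqP.
have [ms mp] := (geq_minl (size sigma) (size p), geq_minr (size sigma) (size p)).
move: (minn _ _) ms mp => m ms mp.
by rewrite -up -[in RHS]us !red_take !take_takel.
Qed.

Lemma contains_map (f : nat -> nat) (s : seq nat) (pat : vpattern) :
  {in s &, forall x y, (f x < f y) = (x < y)} ->
  contains (map f s) pat -> contains s pat.
Proof.
move=> fmono [I [szI sI /allP inI redI adjI]]; exists I; split => //.
  by apply/allP => i /inI; rewrite size_map.
rewrite -redI.
have -> : [seq nth 0 (map f s) i | i <- I] = map f [seq nth 0 s i | i <- I].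
  rewrite -map_comp; apply/eq_in_map => i /inI; rewrite size_map => iI /=.
  exact: nth_map.
rewrite (red_map (f := f)) // => x y /mapP[i /inI iI ->] /mapP[j /inI jI ->].
by apply: fmono; apply: mem_nth; rewrite -(size_map f).
Qed.

Lemma adjacent_shift (I X : seq nat) :
  (forall x, x \in X -> nth 0 (map succn I) x = (nth 0 (map succn I) x.-1).+1) <->
  (forall x, x \in X -> nth 0 I x = (nth 0 I x.-1).+1).
Proof.
split=> adj x /adj; (case: (ltnP x (size I)) => xI; last by rewrite nth_default ?size_map);
  have xI' : x.-1 < size I by lia.
  by rewrite !(nth_map 0) //; case.
by rewrite !(nth_map 0) // => ->.
Qed.

Lemma contains_cons (a : nat) (b : seq nat) (pat : vpattern) :
  contains b pat -> contains (a :: b) pat.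
Proof.
move=> [I [szI sI /allP inI redI adjI]]; exists (map succn I); split.
- by rewrite size_map.
- by rewrite sorted_map.
- by apply/allP => _ /mapP[i /inI iI ->].
- by rewrite -map_comp.
- exact/adjacent_shift.
Qed.

Lemma sorted_head0 (i0 : nat) (I : seq nat) :
  sorted ltn (i0 :: I) -> 0 \in i0 :: I -> i0 = 0.
Proof.
move=> /= sI; rewrite inE => /orP[/eqP->//|I0].
by have /allP/(_ _ I0) := order_path_min ltn_trans sI.
Qed.

Lemma consecutive_from0 (I : seq nat) :
  sorted ltn I -> 0 \in I ->
  (forall x, x \in iota 1 (size I).-1 -> nth 0 I x = (nth 0 I x.-1).+1) ->
  I = iota 0 (size I).
Proof.
case: I => [//|i0 I] sI I0 adj.
have nthI : forall x, x < (size I).+1 -> nth 0 (i0 :: I) x = x.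
  elim=> [|x IH] xI; first exact: sorted_head0 sI I0.
  by rewrite adj ?mem_iota /=; [rewrite IH //; lia | lia].
apply: (@eq_from_nth _ 0); first by rewrite size_iota.
by move=> x xI; rewrite nthI // nth_iota.
Qed.

Lemma take_nth_iota (s : seq nat) (t : nat) :
  t <= size s -> take t s = map (nth 0 s) (iota 0 t).
Proof.
move=> ts; apply: (@eq_from_nth _ 0); first by rewrite size_takel ?size_map ?size_iota.
move=> i; rewrite size_takel // => it.
by rewrite nth_take // (nth_map 0) ?size_iota // nth_iota.
Qed.

Lemma contains_consecutive_cons (a : nat) (b sigma : seq nat) :
  contains (a :: b) (sigma, iota 1 (size sigma).-1) ->
  contains b (sigma, iota 1 (size sigma).-1) \/ red (take (size sigma) (a :: b)) = sigma.
Proof.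
move=> [I [/= szI sI /allP inI /= redI /= adjI]].
have [I0 | I0] := boolP (0 \in I).
  right; rewrite -szI in adjI; have eI := consecutive_from0 sI I0 adjI.
  have szs : size sigma <= size (a :: b).
    case: (size sigma) szI => [//|t] szI.
    by have := inI t; rewrite {1}eI mem_iota /= szI; lia.
  by rewrite take_nth_iota // -szI -eI.
left; exists (map predn I).
have eI : I = map succn (map predn I).
  rewrite -map_comp -[LHS]map_id; apply/eq_in_map => i iI /=.
  by case: i iI => // iI; rewrite iI in I0.
move: (map predn I) eI szI sI inI redI adjI => J -> {I I0} szJ sJ inJ redJ adjJ; split.
- by rewrite size_map in szJ.
- by rewrite sorted_map in sJ; apply: sub_sorted sJ.
- by apply/allP => i iJ; have := inJ i.+1; rewrite (mem_map succn_inj) ltnS => /(_ iJ).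
- by rewrite -map_comp in redJ.
- exact/adjacent_shift.
Qed.

Lemma avoids_red_behead (B : seq vpattern) (a : nat) (b : seq nat) :
  avoids B (a :: b) -> avoids B (red b).
Proof.
move=> av pat patB occ; apply: (av pat patB); apply: contains_cons.
by apply: (contains_map (f := rank b)); [apply: rank_mono | rewrite -redE].
Qed.

Lemma del_pos1 (s : seq nat) : del_pos [:: 1] s = behead s.
Proof.
case: s => [//|x s]; rewrite /del_pos /=.
suff keep : forall j, 1 <= j -> mask [seq i.+1 \notin [:: 1] | i <- iota j (size s)] s = s.
  exact: keep.
elim: s => [//|y s IH] j j1 /=; rewrite inE.
have -> : (j.+1 == 1) = false by apply/eqP; lia.
by rewrite /= IH.
Qed.

Lemma dR1 (s : seq nat) : dR [:: 1] s = red (behead s).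
Proof. by rewrite /dR del_pos1. Qed.

Lemma dR1_red (a : nat) (w : seq nat) : dR [:: 1] (red (a :: w)) = red w.
Proof.
rewrite dR1 [red (a :: w)]redE /= red_map // => x y xw yw.
by apply: rank_mono; rewrite inE ?xw ?yw orbT.
Qed.

Lemma dRw1 (a : nat) (w : seq nat) : dRw [:: 1] (a :: w) = map (unl a) w.
Proof. by rewrite /dRw del_pos1 /=; apply: eq_map => x; rewrite addn0. Qed.

Section DeleteFirst.
Variables (B : seq vpattern) (n a : nat) (w : seq nat).
Hypotheses (aw : a \notin w) (wn : size w < n).

Let inSn := inS n B (red (a :: w)) (a :: w).
Let inSn1 := inS (n - 1) B (red w) (map (unl a) w).

Let prefix_aw (pi : seq nat) (ppi : is_perm n pi) :=
  inS_prefixP (w := a :: w) ppi (size_red _) wn.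

Lemma inS_head (pi : seq nat) : inSn pi -> pi = a :: behead pi.
Proof. by case=> ppi _ /(prefix_aw ppi); case: pi {ppi} => // x pi [->]. Qed.

Lemma inS_dR1 (pi : seq nat) : inSn pi -> inSn1 (dR [:: 1] pi).
Proof.
rewrite dR1 => Hpi; move: Hpi (inS_head Hpi) => [ppi av /(prefix_aw ppi) pre] epi.
move: ppi av pre; rewrite epi /=; move: (behead pi) => b ppi av [pre].
have [/= /andP[_ ub] szb _] := perm_facts ppi.
have pred_b : is_perm (n - 1) (red b) by rewrite -szb subn1 /=; apply: red_is_perm.
split=> //; first exact: avoids_red_behead av.
apply/(inS_prefixP pred_b); rewrite ?size_red ?size_map //; first lia.
by rewrite (red_behead_perm ppi) -map_take pre.
Qed.

(* Elements of S_n^B(p; a :: w) all start with a, so d_{1} is injective. *)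
Lemma inS_dR1_inj (pi1 pi2 : seq nat) :
  inSn pi1 -> inSn pi2 -> dR [:: 1] pi1 = dR [:: 1] pi2 -> pi1 = pi2.
Proof.
move=> H1 H2; have [p1 _ _] := H1; have [p2 _ _] := H2.
move: p1 p2; rewrite !dR1 (inS_head H1) (inS_head H2) /=.
move: (behead pi1) (behead pi2) => b1 b2 p1 p2.
have [/= /andP[a1 _] _ _] := perm_facts p1; have [/= /andP[a2 _] _ _] := perm_facts p2.
rewrite (red_behead_perm p1) (red_behead_perm p2) => e.
by rewrite -(map_lft_unl a1) e (map_lft_unl a2).
Qed.

Lemma cons_lft_prefix (tau : seq nat) :
  inSn1 tau -> take (size (a :: w)) (a :: map (lft a) tau) = a :: w.
Proof.
case=> ptau _ pre.
have {}pre : take (size (map (unl a) w)) tau = map (unl a) w.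
  by apply/(inS_prefixP (p := red w) ptau) => //; rewrite ?size_red ?size_map //; lia.
by rewrite /= -map_take -(size_map (unl a)) pre map_lft_unl.
Qed.

Lemma inS_cons_lft (tau : seq nat) :
  1 <= a <= n -> inSn1 tau -> avoids B (a :: map (lft a) tau) ->
  inSn (a :: map (lft a) tau) /\ dR [:: 1] (a :: map (lft a) tau) = tau.
Proof.
move=> an Htau av; have [ptau _ _] := Htau; rewrite subn1 in ptau.
have ppi := cons_lft_perm an ptau.
split; last by rewrite dR1 /= red_map ?(red_perm ptau) // => x y _ _; apply: lft_mono.
by split=> //; apply/(prefix_aw ppi); apply: cons_lft_prefix.
Qed.

End DeleteFirst.

Lemma cons_lft_avoids (sigma tau : seq nat) (a : nat) :
  let B := [:: (sigma, iota 1 (size sigma).-1)] in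
  avoids B tau -> red (take (size sigma) (a :: map (lft a) tau)) != sigma ->
  avoids B (a :: map (lft a) tau).
Proof.
move=> B av notpre pat; rewrite inE => /eqP -> /contains_consecutive_cons [occ|/eqP];
  last by rewrite (negbTE notpre).
apply: (av _ (mem_head _ _)); apply: (contains_map (f := lft a)) occ.
by move=> x y _ _; apply: lft_mono.
Qed.

Theorem mainTheorem2 (t k : nat) (sigma p : seq nat) :
  is_perm t sigma -> is_perm k p ->
  red (take (minn t k) p) != red (take (minn t k) sigma) ->
  rev_deletable [:: (sigma, iota 1 t.-1)] p [:: 1].
Proof.
move=> /perm_facts[_ szs _] /perm_facts[_ szp _]; rewrite -szs -szp => Hne.
have p0 : 0 < size p by case: (size p) Hne => //; rewrite minn0 !take0 eqxx.
split=> //; split; first by rewrite /= p0.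
move=> n [|a w] szw; first by rewrite -szw in p0.
move=> /andP[aw uw] /allP wn redw _; subst p.
rewrite dR1_red dRw1 /=.
have an : 1 <= a <= n by apply: wn; rewrite mem_head.
have szwn : size w < n.
  have := @uniq_leq_size _ (a :: w) (iota 1 n); rewrite size_iota; apply; first exact/andP.
  by move=> x /wn; rewrite mem_iota; lia.
split; [exact: inS_dR1 | exact: inS_dR1_inj |].
move=> tau Htau; have [_ tau_av _] := Htau.
have pi_av : avoids [:: (sigma, iota 1 (size sigma).-1)] (a :: map (lft a) tau).
  apply: (cons_lft_avoids tau_av); apply: (prefix_not_pattern _ Hne).
  by rewrite size_red (cons_lft_prefix aw szwn Htau).
have [pi_inS dR_pi] := inS_cons_lft aw szwn an Htau pi_av.
by exists (a :: map (lft a) tau).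
Qed.
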